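(* For all probability measures $\nu$ on $\mathcal{G}$: (a) $\Gamma^{\nu}$ is a standard extensive game with perfect recall; and (b) if $\nu$ gives positive probability to all games in $\mathcal{G}$, then $\vec{\sigma}$ is a Nash equilibrium of $\Gamma^\nu$ iff $\vec{\sigma}'$ is a generalized Nash equilibrium of $\Gamma^*$, where $\sigma_{i,\Gamma'}(\langle\Gamma^h\rangle\cdot h')=\sigma'_{i,\Gamma'}(\Gamma^h,h')$.
   Context: Let $\Gamma^* = (\mathcal{G}, \Gamma^m, \mathcal{F})$ be a game with awareness based on a finite standard extensive game $\Gamma$ with perfect recall: $\mathcal{G}$ is a countable set of augmented games based on $\Gamma$ (each augmented game is a finite extensive game with perfect recall, with histories $\mathcal{H}'$, player function $P'$, nature's probabilities $f'_c$, information partitions, utilities $u'_i$, and awareness functions), $\Gamma^m \in \mathcal{G}$ is the modeler's game, and $\mathcal{F}$ maps each pair $(\Gamma^+,h)$ with $\Gamma^+\in\mathcal{G}$ and $P^+(h)=i$ to a pair $(\Gamma^h,I)$ with $\Gamma^h\in\mathcal{G}$ and $I$ an $i$-information set of $\Gamma^h$ (the game $i$ believes is being played at $h$, and the histories he considers possible); $\mathcal{F}$ satisfies consistency conditions including a perfect-recall condition: for all $h'\in I$, there is a prefix $h'_1$ of $h'$ with $P^h(h'_1)=i$ and $\mathcal{F}(\Gamma^h,h'_1)=(\Gamma'',I'')$ iff there is a prefix $h_1$ of $h$ with $P^+(h_1)=i$ and $\mathcal{F}(\Gamma^+,h_1)=(\Gamma'',I'')$, and $h'_1\cdot\langle m\rangle$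 is a prefix of $h'$ iff $h_1\cdot\langle m\rangle$ is a prefix of $h$. Let $\mathcal{G}_i$ be the set of games $\Gamma'\in\mathcal{G}$ such that $\mathcal{F}(\Gamma^+,h)=(\Gamma',\cdot)$ for some $\Gamma^+\in\mathcal{G}$ and $h$ with $P^+(h)=i$. Write $(\Gamma_1,h_1)\sim_i(\Gamma_2,h_2)$ if $\mathcal{F}(\Gamma_1,h_1)=\mathcal{F}(\Gamma_2,h_2)$. A local strategy $\sigma_{i,\Gamma'}$ maps each pair $(\Gamma^+,h)$ with $P^+(h)=i$ and $\mathcal{F}(\Gamma^+,h)=(\Gamma',I)$ to a probability distribution over the moves available at histories in $I$, constant on $\sim_i$-classes. A generalized strategy profile is $\vec{\sigma}'=\{\sigma'_{i,\Gamma'}: i\in N, \Gamma'\in\mathcal{G}_i\}$; it is a generalized Nash equilibrium if for every $i$, $\Gamma'\in\mathcal{G}_i$ and local strategy $\sigma$ for $i$ in $\Gamma'$, $EU_{i,\Gamma'}(\vec{\sigma}')\ge EU_{i,\Gamma'}((\vec{\sigma}'_{-(i,\Gamma')},\sigma))$, where $EU_{i,\Gamma'}$ is $i$'s expected payoff in $\Gamma'$. For $\Gamma'\in\mathcal{G}$ let $\lfloor \mathcal{H}'\rfloor$ be the set of $h\in\mathcal{H}'$ such that for every prefix $h_1\cdot\langle m\rangle$ of $h$, if $P'(h_1)=i\in N$ and $\mathcal{F}(\Gamma',h_1)=(\Gamma'',I)$ then $h_2\cdot\langle m\rangle\in\mathcal{H}''$ for all $h_2\in I$. Given a probability measure $\nu$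 on $\mathcal{G}$, $\Gamma^\nu$ is the standard game with: players $N^\nu=\{(i,\Gamma'):\Gamma'\in\mathcal{G}_i\}$; moves $\mathcal{G}$ together with all moves occurring in the $\lfloor\mathcal{H}'\rfloor$; histories $\langle\,\rangle$ and $\langle\Gamma'\rangle\cdot h$ for $\Gamma'\in\mathcal{G}$, $h\in\lfloor\mathcal{H}'\rfloor$; $P^\nu(\langle\,\rangle)=c$, $P^\nu(\langle\Gamma^h\rangle\cdot h')=(i,\Gamma^{h'})$ if $P^h(h')=i\in N$ and $\mathcal{F}(\Gamma^h,h')=(\Gamma^{h'},\cdot)$, and $=c$ if $P^h(h')=c$; $f^\nu_c(\Gamma'\mid\langle\,\rangle)=\nu(\Gamma')$ and $f^\nu_c(\cdot\mid\langle\Gamma^h\rangle\cdot h')=f^h_c(\cdot\mid h')$ when $P^h(h')=c$; the information sets of player $(i,\Gamma')$ are the $\sim_i$-classes restricted to histories where $i$ moves and $\mathcal{F}$ has the form $(\Gamma',\cdot)$; and $u^\nu_{i,\Gamma'}(\langle\Gamma^h\rangle\cdot z)=u^h_i(z)$ if $\Gamma^h=\Gamma'$ and $0$ otherwise. *)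

From Stdlib Require Import Reals List ClassicalEpsilon.
Import ListNotations.
Open Scope R_scope.

Set Implicit Arguments.

Definition prefix {A : Type} (a b : list A) : Prop := exists c, b = a ++ c.

(* Unconditional (net of finite subsets) summation of a real family over the
   elements of a set [S] (for reals, equivalent to absolute summability);
   [s] is the sum. Finite subsets are duplicate-free lists of elements of S. *)
Definition has_sum_on {X : Type} (S : X -> Prop) (f : X -> R) (s : R) : Prop :=
  forall eps, 0 < eps ->
    exists L0 : list X, Forall S L0 /\
      forall L : list X, NoDup L -> Forall S L -> incl L0 L ->
        Rabs (fold_right Rplus 0 (map f L) - s) < eps.

Definition is_distr {X : Type} (S : X -> Prop) (d : X -> R) : Prop :=
  (forall x, 0 <= d x) /\ (forall x, ~ S x -> d x = 0) /\ has_sum_on S d 1.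

Record egame (Pl Mv : Type) := mkGame {
  pl   : Pl -> Prop;
  hist : list Mv -> Prop;
  pf   : list Mv -> option Pl;                (* player function; None = chance c *)
  fc   : list Mv -> Mv -> R;
  info : Pl -> list Mv -> list Mv -> Prop;    (* "same p-information set" *)
  util : Pl -> list Mv -> R                   (* u_p on terminal histories *)
}.

Section Generic.
Context {Pl Mv : Type} (G : egame Pl Mv).

Definition moves (h : list Mv) (m : Mv) : Prop := hist G (h ++ [m]).
Definition nonterm (h : list Mv) : Prop := hist G h /\ exists m, moves h m.
Definition terminal (z : list Mv) : Prop := hist G z /\ ~ exists m, moves z m.
Definition pmove (h : list Mv) (p : Pl) : Prop := nonterm h /\ pf G h = Some p.

Definition std_game : Prop :=
  hist G [] /\
  (forall h m, hist G (h ++ [m]) -> hist G h) /\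
  (* all histories finite: no infinite chain of histories *)
  (forall h, hist G h -> Acc (fun h2 h1 => hist G h2 /\ exists m, h2 = h1 ++ [m]) h) /\
  (forall h p, pmove h p -> pl G p) /\
  (forall h, nonterm h -> pf G h = None -> is_distr (moves h) (fc G h)) /\
  (forall p h h', info G p h h' -> pmove h p /\ pmove h' p) /\
  (forall p h, pmove h p -> info G p h h) /\
  (forall p h h', info G p h h' -> info G p h' h) /\
  (forall p h h' h'', info G p h h' -> info G p h' h'' -> info G p h h'') /\
  (forall p h h', info G p h h' -> forall m, moves h m <-> moves h' m).

Definition perfect_recall : Prop :=
  forall p h h', info G p h h' ->
    forall h1 m, prefix (h1 ++ [m]) h -> pf G h1 = Some p ->
      exists h1', prefix (h1' ++ [m]) h' /\ pf G h1' = Some p /\ info G p h1 h1'.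

Definition finite_game : Prop := exists L, forall h, hist G h -> In h L.

Definition info_set_of (p : Pl) (I : list Mv -> Prop) : Prop :=
  exists h0, pmove h0 p /\ forall h, I h <-> info G p h0 h.

Fixpoint pp_aux (step : list Mv -> Mv -> R) (acc r : list Mv) : R :=
  match r with
  | [] => 1
  | m :: r' => step acc m * pp_aux step (acc ++ [m]) r'
  end.
Definition path_prob (step : list Mv -> Mv -> R) (z : list Mv) : R := pp_aux step [] z.

Definition exp_payoff (step : list Mv -> Mv -> R) (p : Pl) (v : R) : Prop :=
  has_sum_on terminal (fun z => path_prob step z * util G p z) v.

Definition behavioral (p : Pl) (b : list Mv -> Mv -> R) : Prop :=
  forall h, pmove h p ->
    is_distr (moves h) (b h) /\ forall h', info G p h h' -> forall m, b h m = b h' m.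

Definition profile_step (s : Pl -> list Mv -> Mv -> R) (h : list Mv) (m : Mv) : R :=
  match pf G h with None => fc G h m | Some p => s p h m end.

Definition nash (s : Pl -> list Mv -> Mv -> R) : Prop :=
  (forall p, pl G p -> behavioral p (s p)) /\
  forall p, pl G p -> forall t : Pl -> list Mv -> Mv -> R,
    (forall q, q <> p -> t q = s q) -> behavioral p (t p) ->
    exists v v', exp_payoff (profile_step s) p v /\ exp_payoff (profile_step t) p v' /\ v' <= v.

End Generic.

(* N : players of Gamma, Mv : moves, T : the (countable) set G of augmented games,
   game g : the augmented game g,
   F g h = (Gamma^h, I) *)

Section Awareness.
Context {N Mv T : Type} (game : T -> egame N Mv)
        (F : T -> list Mv -> T * (list Mv -> Prop)).

Definition awareness_game : Prop :=
  (forall g, std_game (game g) /\ perfect_recall (game g) /\ finite_game (game g)) /\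
  (forall g h i, pmove (game g) h i -> info_set_of (game (fst (F g h))) i (snd (F g h))) /\
  (* moves i considers possible are available *)
  (forall g h i, pmove (game g) h i -> forall h' m, snd (F g h) h' ->
     hist (game (fst (F g h))) (h' ++ [m]) -> hist (game g) (h ++ [m])) /\
  (forall g h i, pmove (game g) h i -> forall h', snd (F g h) h' ->
     (forall X, (exists h1', prefix h1' h' /\ pf (game (fst (F g h))) h1' = Some i /\
                             F (fst (F g h)) h1' = X)
                <-> (exists h1, prefix h1 h /\ pf (game g) h1 = Some i /\ F g h1 = X)) /\
     (forall h1' h1 m, prefix h1' h' -> pf (game (fst (F g h))) h1' = Some i ->
        prefix h1 h -> pf (game g) h1 = Some i -> F (fst (F g h)) h1' = F g h1 ->
        (prefix (h1' ++ [m]) h' <-> prefix (h1 ++ [m]) h))).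

Definition Gset (i : N) (g' : T) : Prop :=
  exists g h, pmove (game g) h i /\ fst (F g h) = g'.

Definition local_strategy (i : N) (g' : T) (s : T -> list Mv -> Mv -> R) : Prop :=
  forall g h, pmove (game g) h i -> fst (F g h) = g' ->
    is_distr (fun m => exists h2, snd (F g h) h2 /\ hist (game g') (h2 ++ [m])) (s g h) /\
    forall g2 h2, pmove (game g2) h2 i -> F g2 h2 = F g h -> forall m, s g h m = s g2 h2 m.

Definition gen_profile (s : N -> T -> T -> list Mv -> Mv -> R) : Prop :=
  forall i g', Gset i g' -> local_strategy i g' (s i g').

Definition aug_step (s : N -> T -> T -> list Mv -> Mv -> R) (g' : T)
  (h : list Mv) (m : Mv) : R :=
  match pf (game g') h with
  | None => fc (game g') h m
  | Some j => s j (fst (F g' h)) g' h m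
  end.

Definition gen_nash (s : N -> T -> T -> list Mv -> Mv -> R) : Prop :=
  forall i g', Gset i g' ->
    forall t : N -> T -> T -> list Mv -> Mv -> R,
      (forall j g'', (j, g'') <> (i, g') -> t j g'' = s j g'') ->
      local_strategy i g' (t i g') ->
      exists v v', exp_payoff (game g') (aug_step s g') i v /\
                   exp_payoff (game g') (aug_step t g') i v' /\ v' <= v.

Definition flr (g : T) (h : list Mv) : Prop :=
  hist (game g) h /\
  forall h1 m i, prefix (h1 ++ [m]) h -> pf (game g) h1 = Some i ->
    forall h2, snd (F g h1) h2 -> hist (game (fst (F g h1))) (h2 ++ [m]).

Definition unr (r : list (T + Mv)) : list Mv :=
  flat_map (fun a => match a with inr m => [m] | inl _ => [] end) r.

Definition nuHist (x : list (T + Mv)) : Prop :=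
  x = [] \/ exists g h, x = inl g :: map inr h /\ flr g h.

Definition nuP (x : list (T + Mv)) : option (N * T) :=
  match x with
  | inl g :: r =>
      match pf (game g) (unr r) with
      | Some i => Some (i, fst (F g (unr r)))
      | None => None
      end
  | _ => None
  end.

Definition nuFc (nu : T -> R) (x : list (T + Mv)) (a : T + Mv) : R :=
  match x with
  | [] => match a with inl g => nu g | inr _ => 0 end
  | inl g :: r => match a with inr m => fc (game g) (unr r) m | inl _ => 0 end
  | _ => 0
  end.

Definition nuNonterm (x : list (T + Mv)) : Prop :=
  nuHist x /\ exists a, nuHist (x ++ [a]).

Definition nuInfo (p : N * T) (x y : list (T + Mv)) : Prop :=
  nuNonterm x /\ nuNonterm y /\ nuP x = Some p /\ nuP y = Some p /\
  exists g1 h1 g2 h2, x = inl g1 :: map inr h1 /\ y = inl g2 :: map inr h2 /\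
                      F g1 h1 = F g2 h2.

Definition nuU (p : N * T) (x : list (T + Mv)) : R :=
  match x with
  | inl g :: r =>
      if excluded_middle_informative (g = snd p) then util (game g) (fst p) (unr r) else 0
  | _ => 0
  end.

Definition Gamma_nu (nu : T -> R) : egame (N * T) (T + Mv) :=
  mkGame (fun p => Gset (fst p) (snd p)) nuHist nuP (nuFc nu) nuInfo nuU.

Definition induced (nu : T -> R) (s : N * T -> list (T + Mv) -> (T + Mv) -> R)
  (s' : N -> T -> T -> list Mv -> Mv -> R) : Prop :=
  forall i g' g h, pmove (Gamma_nu nu) (inl g :: map inr h) (i, g') ->
    forall a, s (i, g') (inl g :: map inr h) a =
              match a with inr m => s' i g' g h m | inl _ => 0 end.

End Awareness.

Definition prob_measure {T : Type} (nu : T -> R) : Prop :=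
  (forall g, 0 <= nu g) /\ has_sum_on (fun _ => True) nu 1.

From Stdlib Require Import Reals List Lra Classical ClassicalEpsilon Permutation.
Import ListNotations.
Open Scope R_scope.

(* Γ^ν is a chance move choosing Γ' with probability ν(Γ') followed by a copy of the floor
   ⌊H'⌋.  A floor is prefix closed, and at a move of player i it continues with exactly the
   moves that i, believing to be in F(Γ', h), considers available; these are nonempty and the
   same along the information set, so each floor is a game tree and the ~_i classes are
   information sets.  Perfect recall of Γ^ν is the perfect-recall condition on F, transported
   along a common history of the information set.
   For (b), the payoff of (i, Γ') vanishes outside the copy of Γ', and a local strategy never
   leaves a floor, so EU_(i,Γ')(σ) = ν(Γ') · EU_(i,Γ')(σ'); when ν(Γ') > 0 a profitable
   deviation in one game yields one in the other.  Behavioral strategies of (i, Γ') in Γ^ν and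
   local strategies of i in Γ' correspond by restriction to the floors, resp. by choosing a
   representative of each ~_i class that meets a floor. *)

Definition asbool (P : Prop) : bool :=
  if excluded_middle_informative P then true else false.

Lemma asboolE (P : Prop) : asbool P = true <-> P.
Proof.
  unfold asbool; destruct (excluded_middle_informative P); split; easy.
Qed.

Definition classic_eq_dec {X : Type} (x y : X) : {x = y} + {x <> y} :=
  excluded_middle_informative (x = y).

Definition sumR {X : Type} (f : X -> R) (L : list X) : R := fold_right Rplus 0 (map f L).

Section FiniteSums.
Context {X : Type} (f : X -> R).

Lemma sumR_perm L1 L2 : Permutation L1 L2 -> sumR f L1 = sumR f L2.
Proof. induction 1; unfold sumR in *; simpl; lra. Qed.

Lemma sumR_ext (g : X -> R) L : (forall x, In x L -> f x = g x) -> sumR f L = sumR g L.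
Proof.
  induction L as [|x L IH]; intros Hfg; unfold sumR in *; simpl; [lra|].
  rewrite Hfg by (left; reflexivity); rewrite IH by (intros; apply Hfg; right; assumption).
  reflexivity.
Qed.

Lemma sumR_eq0 L : (forall x, In x L -> f x = 0) -> sumR f L = 0.
Proof.
  intros H0; rewrite (sumR_ext (fun _ => 0)) by exact H0.
  clear H0; induction L; unfold sumR in *; simpl; lra.
Qed.

Lemma sumR_scal c L : sumR (fun x => c * f x) L = c * sumR f L.
Proof. induction L; unfold sumR in *; simpl; [lra | rewrite IHL; lra]. Qed.

Lemma sumR_app L1 L2 : sumR f (L1 ++ L2) = sumR f L1 + sumR f L2.
Proof. induction L1; unfold sumR in *; simpl; [lra | rewrite IHL1; lra]. Qed.

Lemma sumR_filter (p : X -> bool) L :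
  sumR f L = sumR f (filter p L) + sumR f (filter (fun x => negb (p x)) L).
Proof. induction L as [|x L IH]; unfold sumR in *; simpl; [lra|]; destruct (p x); simpl; lra. Qed.

End FiniteSums.

Section UnconditionalSums.
Context {X : Type}.

Lemma has_sum_finite (S : X -> Prop) (f : X -> R) (L0 : list X) :
  NoDup L0 -> Forall S L0 -> (forall x, S x -> ~ In x L0 -> f x = 0) ->
  has_sum_on S f (sumR f L0).
Proof.
  intros HN HS Hout eps Heps; exists L0; split; [exact HS|].
  intros L HNL HSL HL0; change (Rabs (sumR f L - sumR f L0) < eps).
  rewrite (sumR_filter f (fun x => asbool (In x L0)) L).
  rewrite (sumR_perm f (filter _ L) L0).
  - rewrite (sumR_eq0 f (filter _ L)); [rewrite Rplus_0_r, Rminus_diag, Rabs_R0; exact Heps|].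
    intros x Hx; rewrite filter_In, Bool.negb_true_iff in Hx; destruct Hx as [HxL Hx].
    apply Hout; [rewrite Forall_forall in HSL; auto|].
    intros HxL0; apply asboolE in HxL0; congruence.
  - apply NoDup_Permutation; [apply NoDup_filter; exact HNL | exact HN|].
    intros x; rewrite filter_In, asboolE; intuition.
Qed.

Lemma has_sum_unique (S : X -> Prop) (f : X -> R) s1 s2 :
  has_sum_on S f s1 -> has_sum_on S f s2 -> s1 = s2.
Proof.
  intros H1 H2; destruct (Req_dec s1 s2) as [|Hne]; [assumption|exfalso].
  set (e := Rabs (s1 - s2) / 2).
  assert (He : 0 < e) by (unfold e; pose proof (Rabs_pos_lt (s1 - s2)); lra).
  destruct (H1 e He) as [L1 [HS1 HL1]], (H2 e He) as [L2 [HS2 HL2]].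
  set (L := nodup classic_eq_dec (L1 ++ L2)).
  assert (HinL : forall x, In x L <-> In x L1 \/ In x L2)
    by (intros x; unfold L; rewrite nodup_In, in_app_iff; tauto).
  assert (HSL : Forall S L).
  { rewrite Forall_forall in *; intros x Hx; apply HinL in Hx; destruct Hx; auto. }
  specialize (HL1 L (NoDup_nodup _ _) HSL (fun x Hx => proj2 (HinL x) (or_introl Hx))).
  specialize (HL2 L (NoDup_nodup _ _) HSL (fun x Hx => proj2 (HinL x) (or_intror Hx))).
  set (a := fold_right Rplus 0 (map f L)) in *.
  assert (Rabs (s1 - s2) <= Rabs (a - s1) + Rabs (a - s2)).
  { replace (s1 - s2) with ((a - s2) - (a - s1)) by ring.
    eapply Rle_trans; [apply Rabs_triang|]; rewrite Rabs_Ropp; lra. }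
  unfold e in *; lra.
Qed.

Lemma has_sum_ext (S1 S2 : X -> Prop) (f1 f2 : X -> R) s :
  (forall x, S1 x <-> S2 x) -> (forall x, S1 x -> f1 x = f2 x) ->
  has_sum_on S1 f1 s -> has_sum_on S2 f2 s.
Proof.
  intros HS Hf H eps He; destruct (H eps He) as [L0 [HS0 HL]]; exists L0; split.
  - rewrite Forall_forall in *; intros; apply HS; auto.
  - intros L HN HSL HI.
    assert (HSL1 : Forall S1 L) by (rewrite Forall_forall in *; intros; apply HS; auto).
    change (Rabs (sumR f2 L - s) < eps); rewrite <- (sumR_ext f1 f2); [exact (HL L HN HSL1 HI)|].
    rewrite Forall_forall in HSL1; auto.
Qed.

Lemma map_preimage {Y : Type} (phi : Y -> X) (P : X -> Prop) (L : list X) :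
  Forall P L -> (forall x, P x -> exists y, x = phi y) -> exists L', L = map phi L'.
Proof.
  intros HL Hphi; induction HL as [|x L Hx _ [L' ->]]; [exists []; reflexivity|].
  destruct (Hphi x Hx) as [y ->]; exists (y :: L'); reflexivity.
Qed.

Lemma has_sum_comp {Y : Type} (phi : Y -> X) (S : X -> Prop) (f : X -> R) s :
  FinFun.Injective phi -> (forall x, S x -> exists y, x = phi y) ->
  has_sum_on S f s -> has_sum_on (fun y => S (phi y)) (fun y => f (phi y)) s.
Proof.
  intros Hinj Him H eps He; destruct (H eps He) as [L0 [HS0 HL]].
  destruct (map_preimage phi S L0 HS0 Him) as [L0' ->]; exists L0'; split.
  { rewrite Forall_forall in *; intros y Hy; apply HS0, in_map, Hy. }
  intros L HN HSL HI; specialize (HL (map phi L)); rewrite map_map in HL; apply HL.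
  - apply FinFun.Injective_map_NoDup; assumption.
  - rewrite Forall_forall in *; intros x Hx; apply in_map_iff in Hx.
    destruct Hx as [y [<- Hy]]; auto.
  - intros x Hx; apply in_map_iff in Hx; destruct Hx as [y [<- Hy]]; apply in_map; auto.
Qed.

Lemma has_sum_image {Y : Type} (phi : Y -> X) (S : Y -> Prop) (g : Y -> R)
    (S' : X -> Prop) (f : X -> R) s :
  FinFun.Injective phi -> (forall x, S' x <-> exists y, x = phi y /\ S y) ->
  (forall y, S y -> f (phi y) = g y) ->
  has_sum_on S g s -> has_sum_on S' f s.
Proof.
  intros Hinj HS' Hfg H eps He; destruct (H eps He) as [L0 [HS0 HL]].
  exists (map phi L0); split.
  { rewrite Forall_forall in *; intros x Hx; apply in_map_iff in Hx.
    destruct Hx as [y [<- Hy]]; apply HS'; eauto. }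
  intros L HN HSL HI.
  destruct (map_preimage phi S' L HSL) as [L' ->].
  { intros x Hx; apply HS' in Hx; destruct Hx as [y [-> _]]; eauto. }
  assert (HSL' : Forall S L').
  { rewrite Forall_forall in *; intros y Hy.
    destruct (proj1 (HS' (phi y)) (HSL _ (in_map _ _ _ Hy))) as [y' [E Hy']].
    apply Hinj in E; subst; assumption. }
  rewrite map_map, (map_ext_in _ g L'); [apply HL|].
  - eapply NoDup_map_inv; eauto.
  - exact HSL'.
  - intros y Hy; specialize (HI (phi y) (in_map _ _ _ Hy)); apply in_map_iff in HI.
    destruct HI as [y' [E Hy']]; apply Hinj in E; subst; assumption.
  - rewrite Forall_forall in HSL'; intros y Hy; apply Hfg, HSL', Hy.
Qed.

Lemma has_sum_scal (S : X -> Prop) (f : X -> R) c s :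
  has_sum_on S f s -> has_sum_on S (fun x => c * f x) (c * s).
Proof.
  intros H eps He; destruct (Req_dec c 0) as [-> | Hc].
  - exists []; split; [constructor|]; intros L _ _ _.
    change (Rabs (sumR (fun x => 0 * f x) L - 0 * s) < eps).
    rewrite sumR_scal, !Rmult_0_l, Rminus_diag, Rabs_R0; exact He.
  - assert (Hc' : 0 < Rabs c) by (apply Rabs_pos_lt, Hc).
    destruct (H (eps / Rabs c)) as [L0 [HS0 HL]]; [apply Rdiv_lt_0_compat; assumption|].
    exists L0; split; [exact HS0|]; intros L HN HS HI.
    change (Rabs (sumR (fun x => c * f x) L - c * s) < eps).
    rewrite sumR_scal, <- Rmult_minus_distr_l, Rabs_mult.
    specialize (HL L HN HS HI); change (Rabs (sumR f L - s) < eps / Rabs c) in HL.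
    apply (Rmult_lt_compat_l (Rabs c)) in HL; [|exact Hc'].
    unfold Rdiv in HL; rewrite (Rmult_comm eps), <- Rmult_assoc, Rinv_r, Rmult_1_l in HL;
      [exact HL | lra].
Qed.

Section ZeroOutside.
Variables (S S' : X -> Prop) (f : X -> R).
Hypothesis (HSS' : forall x, S x -> S' x) (Hzero : forall x, S' x -> ~ S x -> f x = 0).

Lemma has_sum_superset s : has_sum_on S f s -> has_sum_on S' f s.
Proof.
  intros H eps He; destruct (H eps He) as [L0 [HS0 HL]].
  exists L0; split; [rewrite Forall_forall in *; auto|]; intros L HN HS HI.
  change (Rabs (sumR f L - s) < eps).
  rewrite (sumR_filter f (fun x => asbool (S x)) L),
          (sumR_eq0 f (filter (fun x => negb (asbool (S x))) L)).
  - rewrite Rplus_0_r; apply HL; [apply NoDup_filter, HN | |].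
    + apply Forall_forall; intros x Hx; apply filter_In in Hx; apply asboolE, Hx.
    + intros x Hx; apply filter_In; split; [apply HI, Hx|].
      apply asboolE; rewrite Forall_forall in HS0; auto.
  - intros x Hx; apply filter_In in Hx; destruct Hx as [Hx Hnx].
    rewrite Forall_forall in HS; apply Hzero; [auto|].
    intros HSx; apply asboolE in HSx; rewrite HSx in Hnx; discriminate.
Qed.

Lemma has_sum_subset s : has_sum_on S' f s -> has_sum_on S f s.
Proof.
  intros H eps He; destruct (H eps He) as [L0 [HS0 HL]].
  set (Lout := nodup classic_eq_dec (filter (fun x => negb (asbool (S x))) L0)).
  assert (HLout : forall x, In x Lout <-> In x L0 /\ ~ S x).
  { intros x; unfold Lout; rewrite nodup_In, filter_In, Bool.negb_true_iff.
    split; intros [Hx HSx]; split; auto.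
    - intros HSx'; apply asboolE in HSx'; congruence.
    - destruct (asbool (S x)) eqn:E; [destruct (HSx (proj1 (asboolE _) E)) | reflexivity]. }
  exists (filter (fun x => asbool (S x)) L0); split.
  { apply Forall_forall; intros x Hx; apply filter_In in Hx; apply asboolE, Hx. }
  intros L HN HS HI.
  assert (Hsum : sumR f (L ++ Lout) = sumR f L).
  { rewrite sumR_app, (sumR_eq0 f Lout), Rplus_0_r; [reflexivity|].
    intros x Hx; apply HLout in Hx; destruct Hx as [Hx HSx].
    rewrite Forall_forall in HS0; apply Hzero; auto. }
  change (Rabs (sumR f L - s) < eps); rewrite <- Hsum; apply HL.
  - apply NoDup_app; [exact HN | apply NoDup_nodup|].
    intros x HxL Hx; apply HLout in Hx; rewrite Forall_forall in HS; apply Hx, HS, HxL.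
  - apply Forall_app; split; [rewrite Forall_forall in *; auto|].
    rewrite Forall_forall in *; intros x Hx; apply HLout in Hx; apply HS0, Hx.
  - intros x Hx; apply in_or_app; destruct (classic (S x)) as [HSx | HSx].
    + left; apply HI, filter_In; split; [exact Hx | apply asboolE, HSx].
    + right; apply HLout; auto.
Qed.

End ZeroOutside.

End UnconditionalSums.

Section Prefixes.
Context {A : Type}.

Lemma prefix_refl (a : list A) : prefix a a.
Proof. exists []; rewrite app_nil_r; reflexivity. Qed.

Lemma prefix_app (a b : list A) : prefix a (a ++ b).
Proof. exists b; reflexivity. Qed.

Lemma prefix_trans (a b c : list A) : prefix a b -> prefix b c -> prefix a c.
Proof. intros [x ->] [y ->]; exists (x ++ y); rewrite app_assoc; reflexivity. Qed.

Lemma prefix_snoc_inv (a c : list A) b d :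
  prefix (a ++ [b]) (c ++ [d]) -> prefix (a ++ [b]) c \/ (a = c /\ b = d).
Proof.
  intros [e He]; destruct e as [|y e _] using rev_ind.
  - rewrite app_nil_r in He; apply app_inj_tail in He; right; intuition.
  - rewrite app_assoc in He; apply app_inj_tail in He; left; exists e; apply He.
Qed.

Lemma prefix_nil_snoc (a : list A) b : ~ prefix (a ++ [b]) [].
Proof. intros [e He]; destruct a; discriminate. Qed.

End Prefixes.

Lemma hist_prefix {Pl Mv : Type} (G : egame Pl Mv) :
  (forall h m, hist G (h ++ [m]) -> hist G h) ->
  forall h h', prefix h h' -> hist G h' -> hist G h.
Proof.
  intros Hsnoc h h' [r ->]; induction r as [|x r IH] using rev_ind; intros H.
  - rewrite app_nil_r in H; exact H.
  - apply IH; rewrite app_assoc in H; exact (Hsnoc _ _ H).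
Qed.

Section FiniteGames.
Context {Pl Mv : Type} (G : egame Pl Mv).
Hypothesis HG : finite_game G.

Lemma terminal_list : exists LT, NoDup LT /\ forall z, In z LT <-> terminal G z.
Proof.
  destruct HG as [L HL].
  exists (nodup classic_eq_dec (filter (fun z => asbool (terminal G z)) L)).
  split; [apply NoDup_nodup|]; intros z; rewrite nodup_In, filter_In, asboolE.
  split; [intros [_ Hz]; exact Hz | intros Hz; split; [apply HL, Hz | exact Hz]].
Qed.

Lemma exp_payoff_exists step p : exists v, exp_payoff G step p v.
Proof.
  destruct terminal_list as [LT [HN HT]].
  eexists; apply (has_sum_finite _ _ LT HN).
  - apply Forall_forall; intros z; apply HT.
  - intros z Hz Hn; exfalso; apply Hn, HT, Hz.
Qed.

End FiniteGames.

(* [lift g h] is the history ⟨g⟩·h of Γ^ν. *)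
Notation lift g h := (@inl _ _ g :: map inr h).

Section Lifting.
Context {T Mv : Type}.

Lemma unr_lift (h : list Mv) : unr (map (@inr T Mv) h) = h.
Proof. induction h as [|m h IH]; simpl; [reflexivity | rewrite IH; reflexivity]. Qed.

Lemma inl_injective : FinFun.Injective (@inl T Mv).
Proof. intros x y E; injection E; auto. Qed.

Lemma inr_injective : FinFun.Injective (@inr T Mv).
Proof. intros x y E; injection E; auto. Qed.

Lemma lift_inj (g1 g2 : T) (h1 h2 : list Mv) : lift g1 h1 = lift g2 h2 -> g1 = g2 /\ h1 = h2.
Proof.
  intros E; injection E as -> E; split; [reflexivity|].
  rewrite <- (unr_lift h1), <- (unr_lift h2), E; reflexivity.
Qed.

Lemma lift_snoc (g : T) (h : list Mv) m : lift g (h ++ [m]) = lift g h ++ [inr m].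
Proof. simpl; rewrite map_app; reflexivity. Qed.

Lemma prefix_lift_inv (g g' : T) (h h' : list Mv) :
  prefix (lift g h) (lift g' h') -> g = g' /\ prefix h h'.
Proof.
  intros [e E]; simpl in E; injection E as -> E; split; [reflexivity|].
  apply map_eq_app in E; destruct E as [l1 [l2 [-> [E1 _]]]].
  apply (f_equal unr) in E1; rewrite !unr_lift in E1; subst l1; apply prefix_app.
Qed.

Lemma prefix_lift (g : T) (h h' : list Mv) : prefix h h' -> prefix (lift g h) (lift g h').
Proof. intros [e ->]; exists (map inr e); simpl; rewrite map_app; reflexivity. Qed.
End Lifting.

Section AwarenessGame.
Context {N Mv T : Type} (game : T -> egame N Mv) (F : T -> list Mv -> T * (list Mv -> Prop)).
Hypothesis Haw : awareness_game game F.

Local Notation floor := (flr game F).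

Lemma augmented_std g : std_game (game g).
Proof. apply (proj1 Haw g). Qed.

Lemma augmented_finite g : finite_game (game g).
Proof. apply (proj1 Haw g). Qed.

Lemma F_info_set g h i : pmove (game g) h i ->
  exists h0, pmove (game (fst (F g h))) h0 i /\
    forall h2, snd (F g h) h2 <-> info (game (fst (F g h))) i h0 h2.
Proof. apply (proj1 (proj2 Haw)). Qed.

Lemma F_moves_available g h i : pmove (game g) h i -> forall h' m, snd (F g h) h' ->
  hist (game (fst (F g h))) (h' ++ [m]) -> hist (game g) (h ++ [m]).
Proof. apply (proj1 (proj2 (proj2 Haw))). Qed.

Lemma F_recall g h i : pmove (game g) h i -> forall h', snd (F g h) h' ->
  (forall X, (exists h1', prefix h1' h' /\ pf (game (fst (F g h))) h1' = Some i /\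
                          F (fst (F g h)) h1' = X)
             <-> (exists h1, prefix h1 h /\ pf (game g) h1 = Some i /\ F g h1 = X)) /\
  (forall h1' h1 m, prefix h1' h' -> pf (game (fst (F g h))) h1' = Some i ->
     prefix h1 h -> pf (game g) h1 = Some i -> F (fst (F g h)) h1' = F g h1 ->
     (prefix (h1' ++ [m]) h' <-> prefix (h1 ++ [m]) h)).
Proof. apply (proj2 (proj2 (proj2 Haw))). Qed.

Lemma F_info_moves g h i h2 h3 m : pmove (game g) h i ->
  snd (F g h) h2 -> snd (F g h) h3 ->
  hist (game (fst (F g h))) (h2 ++ [m]) -> hist (game (fst (F g h))) (h3 ++ [m]).
Proof.
  intros Hp H2 H3; destruct (F_info_set g h i Hp) as [h0 [_ HI]].
  apply HI in H2; apply HI in H3.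
  destruct (augmented_std (fst (F g h))) as (_&_&_&_&_&_&_&Hsym&Htrans&Hmoves).
  apply (Hmoves _ _ _ (Htrans _ _ _ _ (Hsym _ _ _ H2) H3) m).
Qed.

Lemma F_info_nonempty g h i : pmove (game g) h i ->
  exists h0 m0, snd (F g h) h0 /\ hist (game (fst (F g h))) (h0 ++ [m0]).
Proof.
  intros Hp; destruct (F_info_set g h i Hp) as [h0 [Hp0 HI]].
  destruct (augmented_std (fst (F g h))) as (_&_&_&_&_&_&Hrefl&_).
  destruct (proj1 Hp0) as [_ [m0 Hm0]]; exists h0, m0; split; [apply HI, Hrefl, Hp0 | exact Hm0].
Qed.

(* The perfect-recall condition on [F], read through a history [h0] of the common
   information set. *)
Lemma F_recall_transfer g1 h1 g2 h2 j h m :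
  pmove (game g1) h1 j -> pmove (game g2) h2 j -> F g1 h1 = F g2 h2 ->
  prefix (h ++ [m]) h1 -> pf (game g1) h = Some j ->
  exists h', prefix (h' ++ [m]) h2 /\ pf (game g2) h' = Some j /\ F g2 h' = F g1 h.
Proof.
  intros Hp1 Hp2 EF Hpre Ep.
  destruct (F_info_nonempty g1 h1 j Hp1) as [h0 [_ [H0 _]]].
  assert (Hh : prefix h h1) by (eapply prefix_trans; [apply prefix_app | exact Hpre]).
  destruct (F_recall g1 h1 j Hp1 h0 H0) as [A1 B1].
  destruct (proj2 (A1 (F g1 h))) as [h0' [Hpre0 [Ep0 EF0]]]; [eauto|].
  assert (Hm0 : prefix (h0' ++ [m]) h0) by (apply (B1 h0' h m); auto).
  rewrite EF in H0; destruct (F_recall g2 h2 j Hp2 h0 H0) as [A2 B2].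
  rewrite <- EF in A2, B2.
  destruct (proj1 (A2 (F g1 h))) as [h' [Hpre' [Ep' EF']]]; [eauto|].
  exists h'; split; [apply (B2 h0' h' m); auto; congruence | auto].
Qed.

Lemma flr_hist g h : floor g h -> hist (game g) h.
Proof. intros [H _]; exact H. Qed.

Lemma flr_prefix g h h' : prefix h h' -> floor g h' -> floor g h.
Proof.
  intros Hp [Hh Hc]; split.
  - eapply hist_prefix; [apply augmented_std | exact Hp | exact Hh].
  - intros h1 m i Hp1; apply Hc; eapply prefix_trans; eauto.
Qed.

Lemma flr_nil g : floor g [].
Proof.
  split; [apply (augmented_std g)|].
  intros h1 m i Hp; exfalso; eapply prefix_nil_snoc; eauto.
Qed.

Lemma flr_snoc g h m : floor g (h ++ [m]) <->
  floor g h /\ hist (game g) (h ++ [m]) /\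
  (forall i, pf (game g) h = Some i ->
     forall h2, snd (F g h) h2 -> hist (game (fst (F g h))) (h2 ++ [m])).
Proof.
  split.
  - intros Hf; split; [eapply flr_prefix; [apply prefix_app | exact Hf]|].
    destruct Hf as [Hh Hc]; split; [exact Hh|].
    intros i Hi; eapply Hc; [apply prefix_refl | exact Hi].
  - intros [[Hh Hc] [Hh' Hm]]; split; [exact Hh'|].
    intros h1 m1 i Hp Hi; apply prefix_snoc_inv in Hp; destruct Hp as [Hp|[-> ->]].
    + eapply Hc; eauto.
    + eapply Hm; eauto.
Qed.

Lemma flr_snoc_chance g h m : pf (game g) h = None ->
  (floor g (h ++ [m]) <-> floor g h /\ hist (game g) (h ++ [m])).
Proof.
  intros Ep; rewrite flr_snoc; split; [tauto|].
  intros [Hf Hm]; split; [exact Hf|]; split; [exact Hm|]; intros i Hi; congruence.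
Qed.

Lemma flr_snoc_player g h j m : floor g h -> pmove (game g) h j ->
  (floor g (h ++ [m]) <-> exists h2, snd (F g h) h2 /\ hist (game (fst (F g h))) (h2 ++ [m])).
Proof.
  intros Hf Hp; pose proof (proj2 Hp) as Ep; rewrite flr_snoc; split.
  - intros [_ [_ Hm]]; destruct (F_info_nonempty g h j Hp) as [h0 [_ [H0 _]]].
    exists h0; split; [exact H0 | eapply Hm; eauto].
  - intros [h2 [H2 Hm2]]; split; [exact Hf|]; split; [eapply F_moves_available; eauto|].
    intros i _ h3 H3; apply (F_info_moves g h j h2 h3 m); auto.
Qed.

Lemma flr_extend g h : floor g h -> nonterm (game g) h -> exists m, floor g (h ++ [m]).
Proof.
  intros Hf Hn; destruct (pf (game g) h) as [j|] eqn:Ep.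
  - assert (Hp : pmove (game g) h j) by (split; assumption).
    destruct (F_info_nonempty g h j Hp) as [h0 [m0 H0]].
    exists m0; apply (flr_snoc_player g h j m0 Hf Hp); eauto.
  - destruct Hn as [_ [m Hm]]; exists m; apply flr_snoc_chance; auto.
Qed.

Lemma flr_leave g h m : floor g h -> hist (game g) (h ++ [m]) -> ~ floor g (h ++ [m]) ->
  exists j, pmove (game g) h j /\
    ~ exists h2, snd (F g h) h2 /\ hist (game (fst (F g h))) (h2 ++ [m]).
Proof.
  intros Hf Hm Hn; destruct (pf (game g) h) as [j|] eqn:Ep.
  - assert (Hp : pmove (game g) h j) by (split; [split; [apply Hf | eauto] | exact Ep]).
    exists j; split; [exact Hp|]; rewrite <- (flr_snoc_player g h j m Hf Hp); exact Hn.
  - exfalso; apply Hn, flr_snoc_chance; auto.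
Qed.

Lemma pp_off_floor g (step : list Mv -> Mv -> R) :
  (forall h m, floor g h -> hist (game g) (h ++ [m]) -> ~ floor g (h ++ [m]) -> step h m = 0) ->
  forall r h, floor g h -> hist (game g) (h ++ r) -> ~ floor g (h ++ r) -> pp_aux step h r = 0.
Proof.
  intros Hoff; induction r as [|m r IH]; intros h Hf Hh Hn.
  { rewrite app_nil_r in Hn; contradiction. }
  simpl; replace (h ++ m :: r) with ((h ++ [m]) ++ r) in * by (rewrite <- app_assoc; reflexivity).
  destruct (classic (floor g (h ++ [m]))) as [Hm | Hm].
  - rewrite IH; auto; lra.
  - rewrite Hoff; auto; [lra|].
    eapply hist_prefix; [apply augmented_std | apply prefix_app | exact Hh].
Qed.

Lemma pp_lift g (stepG : list (T + Mv) -> T + Mv -> R) (step : list Mv -> Mv -> R) :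
  (forall h m, floor g (h ++ [m]) -> stepG (lift g h) (inr m) = step h m) ->
  forall r h, floor g (h ++ r) -> pp_aux stepG (lift g h) (map inr r) = pp_aux step h r.
Proof.
  intros Hstep; induction r as [|m r IH]; intros h Hf; [reflexivity|].
  replace (h ++ m :: r) with ((h ++ [m]) ++ r) in * by (rewrite <- app_assoc; reflexivity).
  change (stepG (lift g h) (inr m) * pp_aux stepG (lift g h ++ [inr m]) (map inr r) =
          step h m * pp_aux step (h ++ [m]) r).
  rewrite <- lift_snoc, IH, Hstep; auto.
  eapply flr_prefix; [apply prefix_app | exact Hf].
Qed.

Lemma nuHist_lift g h : nuHist game F (lift g h) <-> floor g h.
Proof.
  split.
  - intros [E | [g0 [h0 [E Hf]]]]; [discriminate|].
    apply lift_inj in E; destruct E as [-> ->]; exact Hf.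
  - intros Hf; right; eauto.
Qed.

Lemma nuHist_snoc x a : nuHist game F (x ++ [a]) ->
  (x = [] /\ exists g, a = inl g) \/
  (exists g h m, x = lift g h /\ a = inr m /\ floor g (h ++ [m])).
Proof.
  intros [E | [g [h [E Hf]]]]; [destruct x; discriminate|].
  destruct x as [|y x]; [left; injection E as -> _; eauto | right].
  injection E as -> E; symmetry in E; apply map_eq_app in E.
  destruct E as [l1 [l2 [-> [<- E]]]].
  destruct l2 as [|m [|m' l2]]; try discriminate; injection E as <-.
  exists g, l1, m; auto.
Qed.

Section GammaNu.
Variable nu : T -> R.
Local Notation Gnu := (Gamma_nu game F nu).

Lemma nu_moves_lift g h a :
  moves Gnu (lift g h) a <-> exists m, a = inr m /\ floor g (h ++ [m]).
Proof.
  unfold moves; cbn [hist Gamma_nu]; split.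
  - intros H; apply nuHist_snoc in H.
    destruct H as [[E _] | [g0 [h0 [m [E [-> Hf]]]]]]; [discriminate|].
    apply lift_inj in E; destruct E as [-> ->]; eauto.
  - intros [m [-> Hf]]; rewrite <- lift_snoc; apply nuHist_lift, Hf.
Qed.

Lemma nu_moves_root a : moves Gnu [] a <-> exists g, a = inl g.
Proof.
  unfold moves; cbn [hist Gamma_nu]; split.
  - intros H; apply (nuHist_snoc [] a) in H.
    destruct H as [[_ Ha] | [g [h [m [E _]]]]]; [exact Ha | destruct h; discriminate].
  - intros [g ->]; apply (nuHist_lift g []), flr_nil.
Qed.

Lemma nuP_lift g h : nuP game F (lift g h) =
  match pf (game g) h with Some i => Some (i, fst (F g h)) | None => None end.
Proof. simpl; rewrite unr_lift; reflexivity. Qed.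

Lemma nu_pmove_inv x p : pmove Gnu x p ->
  exists g h j, x = lift g h /\ floor g h /\ pmove (game g) h j /\ p = (j, fst (F g h)).
Proof.
  intros [[_ [a Ha]] Hp]; cbn [pf Gamma_nu] in Hp; unfold moves in Ha; cbn [hist Gamma_nu] in Ha.
  apply nuHist_snoc in Ha; destruct Ha as [[-> _] | [g [h [m [-> [-> Hf]]]]]]; [discriminate|].
  rewrite nuP_lift in Hp; destruct (pf (game g) h) as [j|] eqn:Ep; [|discriminate].
  injection Hp as <-; exists g, h, j.
  assert (Hfh : floor g h) by (eapply flr_prefix; [apply prefix_app | exact Hf]).
  split; [reflexivity|]; split; [exact Hfh|]; split; [|reflexivity].
  split; [split; [apply flr_hist, Hfh | exists m; apply flr_hist, Hf] | exact Ep].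
Qed.

Lemma lift_pmove g h j m : floor g (h ++ [m]) -> pf (game g) h = Some j ->
  pmove Gnu (lift g h) (j, fst (F g h)).
Proof.
  intros Hf Ep; split; [split|].
  - cbn [hist Gamma_nu]; apply nuHist_lift; eapply flr_prefix; [apply prefix_app | exact Hf].
  - exists (inr m); apply nu_moves_lift; eauto.
  - cbn [pf Gamma_nu]; rewrite nuP_lift, Ep; reflexivity.
Qed.

Lemma nu_moves_player g h j a : floor g h -> pmove (game g) h j ->
  (moves Gnu (lift g h) a <->
   exists m, a = inr m /\ exists h2, snd (F g h) h2 /\ hist (game (fst (F g h))) (h2 ++ [m])).
Proof.
  intros Hf Hp; rewrite nu_moves_lift.
  split; intros [m [-> Hm]]; exists m; (split; [reflexivity|]); eapply flr_snoc_player; eauto.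
Qed.

Lemma nu_info_inv p x y : info Gnu p x y ->
  exists g1 h1 g2 h2 j, x = lift g1 h1 /\ y = lift g2 h2 /\ F g1 h1 = F g2 h2 /\
    floor g1 h1 /\ floor g2 h2 /\ pmove (game g1) h1 j /\ pmove (game g2) h2 j /\
    p = (j, fst (F g1 h1)).
Proof.
  intros (Hx & Hy & Hpx & Hpy & g1 & h1 & g2 & h2 & -> & -> & EF).
  destruct (nu_pmove_inv (lift g1 h1) p (conj Hx Hpx))
    as [g1' [h1' [j [E1 [Hf1 [Hp1 ->]]]]]].
  destruct (nu_pmove_inv (lift g2 h2) _ (conj Hy Hpy))
    as [g2' [h2' [j' [E2 [Hf2 [Hp2 Ep]]]]]].
  apply lift_inj in E1, E2; destruct E1 as [<- <-], E2 as [<- <-].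
  injection Ep as <- _; exists g1, h1, g2, h2, j; auto 10.
Qed.

Lemma acc_lift g h : Acc (fun h2 h1 => hist (game g) h2 /\ exists m, h2 = h1 ++ [m]) h ->
  Acc (fun x2 x1 => hist Gnu x2 /\ exists a, x2 = x1 ++ [a]) (lift g h).
Proof.
  induction 1 as [h _ IH]; constructor; intros y [Hy [a ->]].
  assert (Ha : moves Gnu (lift g h) a) by exact Hy.
  apply nu_moves_lift in Ha; destruct Ha as [m [-> Hf]].
  rewrite <- lift_snoc; apply IH; split; [apply flr_hist, Hf | eauto].
Qed.

Lemma nu_hist_snoc x a : hist Gnu (x ++ [a]) -> hist Gnu x.
Proof.
  cbn [hist Gamma_nu]; intros H; apply nuHist_snoc in H.
  destruct H as [[-> _] | [g [h [m [-> [_ Hf]]]]]]; [left; reflexivity|].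
  apply nuHist_lift; eapply flr_prefix; [apply prefix_app | exact Hf].
Qed.

Lemma nu_hist_acc x : hist Gnu x -> Acc (fun x2 x1 => hist Gnu x2 /\ exists a, x2 = x1 ++ [a]) x.
Proof.
  intros [-> | [g [h [-> Hf]]]].
  - constructor; intros y [Hy [a ->]].
    destruct (proj1 (nu_moves_root a) Hy) as [g ->].
    apply (acc_lift g []), (augmented_std g), (augmented_std g).
  - apply acc_lift, (augmented_std g), flr_hist, Hf.
Qed.

Lemma nu_root_distr : prob_measure nu -> is_distr (moves Gnu []) (fc Gnu []).
Proof.
  intros [Hnu0 Hnu1]; split; [|split].
  - intros [g|m]; cbn; [apply Hnu0 | lra].
  - intros [g|m] Hn; cbn; [|reflexivity].
    exfalso; apply Hn, nu_moves_root; eauto.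
  - apply (has_sum_image inl (fun _ => True) nu); auto using inl_injective.
    + intros a; rewrite nu_moves_root; split; [intros [g ->] | intros [g [-> _]]]; eauto.
Qed.

Lemma nu_chance_lift_distr g h : floor g h -> nonterm (game g) h -> pf (game g) h = None ->
  is_distr (moves Gnu (lift g h)) (fc Gnu (lift g h)).
Proof.
  intros Hf Hn Ep.
  destruct (proj1 (proj2 (proj2 (proj2 (proj2 (augmented_std g))))) h Hn Ep)
    as [D0 [D1 D2]].
  assert (Hmv : forall a, moves Gnu (lift g h) a <-> exists m, a = inr m /\ moves (game g) h m).
  { intros a; rewrite nu_moves_lift; unfold moves.
    split; intros [m [-> Hm]]; exists m; (split; [reflexivity|]);
      [apply flr_hist, Hm | apply flr_snoc_chance; auto]. }
  assert (Efc : forall a, fc Gnu (lift g h) a =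
                          match a with inl _ => 0 | inr m => fc (game g) h m end)
    by (intros [g'|m]; simpl; rewrite ?unr_lift; reflexivity).
  split; [|split].
  - intros [g'|m]; rewrite Efc; [lra | apply D0].
  - intros [g'|m] Hm; rewrite Efc; [reflexivity|]; apply D1; intros Hm'; apply Hm, Hmv; eauto.
  - apply (has_sum_image inr (moves (game g) h) (fc (game g) h)); auto using inr_injective.
Qed.

Lemma nu_chance_distr x : prob_measure nu -> nonterm Gnu x -> pf Gnu x = None ->
  is_distr (moves Gnu x) (fc Gnu x).
Proof.
  intros Hnu [Hx [a Ha]] Hc; unfold moves in Ha; cbn [hist Gamma_nu] in Ha.
  apply nuHist_snoc in Ha; destruct Ha as [[-> _] | [g [h [m [-> [-> Hf]]]]]].
  - apply nu_root_distr, Hnu.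
  - cbn [pf Gamma_nu] in Hc; rewrite nuP_lift in Hc.
    destruct (pf (game g) h) eqn:Ep; [discriminate|].
    assert (Hfh : floor g h) by (eapply flr_prefix; [apply prefix_app | exact Hf]).
    apply nu_chance_lift_distr; auto.
    split; [apply flr_hist, Hfh | exists m; apply flr_hist, Hf].
Qed.

Lemma nu_info_moves p x y : info Gnu p x y -> forall a, moves Gnu x a <-> moves Gnu y a.
Proof.
  intros Hxy a; destruct (nu_info_inv p x y Hxy)
    as (g1 & h1 & g2 & h2 & j & -> & -> & EF & Hf1 & Hf2 & Hp1 & Hp2 & _).
  rewrite (nu_moves_player g1 h1 j a Hf1 Hp1), (nu_moves_player g2 h2 j a Hf2 Hp2), EF.
  reflexivity.
Qed.

Theorem Gamma_nu_std : prob_measure nu -> std_game Gnu.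
Proof.
  intros Hnu; split; [left; reflexivity|].
  split; [exact nu_hist_snoc|]; split; [exact nu_hist_acc|].
  split.
  { intros x p Hp; destruct (nu_pmove_inv x p Hp) as [g [h [j [_ [_ [Hpm ->]]]]]].
    exists g, h; auto. }
  split; [intros x; apply nu_chance_distr, Hnu|].
  split; [intros p x y (Hx & Hy & Hpx & Hpy & _); split; split; assumption|].
  split.
  { intros p x Hp; destruct (nu_pmove_inv x p Hp) as [g [h [j [-> _]]]].
    destruct Hp as [Hn Hpf]; refine (conj Hn (conj Hn (conj Hpf (conj Hpf _)))).
    exists g, h, g, h; auto. }
  split.
  { intros p x y (Hx & Hy & Hpx & Hpy & g1 & h1 & g2 & h2 & E1 & E2 & EF).
    refine (conj Hy (conj Hx (conj Hpy (conj Hpx _)))); exists g2, h2, g1, h1; auto. }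
  split; [|exact nu_info_moves].
  intros p x y z (Hx & Hy & Hpx & Hpy & g1 & h1 & g2 & h2 & E1 & E2 & EF)
    (Hy' & Hz & Hpy' & Hpz & g3 & h3 & g4 & h4 & E3 & E4 & EF').
  refine (conj Hx (conj Hz (conj Hpx (conj Hpz _)))); exists g1, h1, g4, h4.
  split; [exact E1|]; split; [exact E4|].
  rewrite E2 in E3; apply lift_inj in E3; destruct E3 as [-> ->]; congruence.
Qed.

Theorem Gamma_nu_perfect_recall : perfect_recall Gnu.
Proof.
  intros p x y Hxy x1 a Hpre Hpf.
  destruct (nu_info_inv p x y Hxy)
    as (g1 & h1 & g2 & h2 & j & -> & -> & EF & Hf1 & Hf2 & Hp1 & Hp2 & ->).
  assert (Hx1 : nuHist game F (x1 ++ [a]))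
    by (eapply (hist_prefix Gnu); [apply nu_hist_snoc | exact Hpre | apply nuHist_lift, Hf1]).
  apply nuHist_snoc in Hx1; destruct Hx1 as [[-> _] | [g [h [m [-> [-> Hfm]]]]]];
    [discriminate|].
  rewrite <- lift_snoc in Hpre; apply prefix_lift_inv in Hpre; destruct Hpre as [-> Hpre].
  cbn [pf Gamma_nu] in Hpf; rewrite nuP_lift in Hpf.
  destruct (pf (game g1) h) as [j'|] eqn:Ep; [|discriminate]; injection Hpf as -> EFh.
  destruct (F_recall_transfer g1 h1 g2 h2 j h m Hp1 Hp2 EF Hpre Ep) as [h' [Hpre' [Ep' EF']]].
  assert (Hfm' : flr game F g2 (h' ++ [m])) by (eapply flr_prefix; [exact Hpre' | exact Hf2]).
  destruct (lift_pmove g1 h j m Hfm Ep) as [Hn Hpx].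
  destruct (lift_pmove g2 h' j m Hfm' Ep') as [Hn' Hpy].
  rewrite EF', EFh in Hpy; rewrite EFh in Hpx.
  exists (lift g2 h'); split; [rewrite <- lift_snoc; apply prefix_lift, Hpre'|].
  split; [exact Hpy|].
  refine (conj Hn (conj Hn' (conj Hpx (conj Hpy _)))); exists g1, h, g2, h'; auto.
Qed.

Lemma nu_terminal_lift g z : terminal (game g) z -> floor g z -> terminal Gnu (lift g z).
Proof.
  intros [_ Hz] Hf; split; [apply nuHist_lift, Hf|].
  intros [a Ha]; apply nu_moves_lift in Ha; destruct Ha as [m [_ Hm]].
  apply Hz; exists m; apply flr_hist, Hm.
Qed.

(* [g0] only witnesses that the root of [Gnu] is not terminal. *)
Lemma nu_terminal_inv (g0 : T) x : terminal Gnu x ->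
  exists g z, x = lift g z /\ floor g z /\ terminal (game g) z.
Proof.
  intros [[-> | [g [z [-> Hf]]]] Hx].
  - exfalso; apply Hx; exists (inl g0); apply nu_moves_root; eauto.
  - exists g, z; split; [reflexivity|]; split; [exact Hf|]; split; [apply flr_hist, Hf|].
    intros Hn; destruct (flr_extend g z Hf (conj (flr_hist _ _ Hf) Hn)) as [m Hm].
    apply Hx; exists (inr m); apply nu_moves_lift; eauto.
Qed.

(* The payoff of [(i, g)] in [Gnu] lives on the subtree of [g], which is reached with
   probability [nu g]. *)
Lemma exp_payoff_lift g i stepG step w :
  stepG [] (inl g) = nu g ->
  (forall h m, floor g (h ++ [m]) -> stepG (lift g h) (inr m) = step h m) ->
  (forall h m, floor g h -> hist (game g) (h ++ [m]) -> ~ floor g (h ++ [m]) -> step h m = 0) ->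
  exp_payoff (game g) step i w -> exp_payoff Gnu stepG (i, g) (nu g * w).
Proof.
  intros Hroot Hstep Hoff Hw.
  apply (has_sum_superset (fun x => exists z, x = lift g z /\ terminal (game g) z /\ floor g z)).
  - intros x [z [-> [Hz Hf]]]; apply nu_terminal_lift; auto.
  - intros x Hx Hnx; destruct (nu_terminal_inv g x Hx) as [g' [z [-> [Hf Hz]]]].
    cbn [util Gamma_nu nuU snd fst].
    destruct (excluded_middle_informative (g' = g)) as [-> | _]; [|ring].
    exfalso; apply Hnx; eauto.
  - apply (has_sum_image (fun z => lift g z) (fun z => terminal (game g) z /\ floor g z)
             (fun z => nu g * (path_prob step z * util (game g) i z))).
    + intros z1 z2 E; apply lift_inj in E; apply E.
    + intros x; split; [intros [z [-> Hz]] | intros [z [-> Hz]]]; eauto.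
    + intros z [_ Hf]; unfold path_prob; cbn [util Gamma_nu nuU snd fst].
      change (stepG [] (inl g) * pp_aux stepG (lift g []) (map inr z) *
        (if excluded_middle_informative (g = g)
         then util (game g) i (unr (map (@inr T Mv) z)) else 0) =
        nu g * (pp_aux step [] z * util (game g) i z)).
      rewrite Hroot, (pp_lift g stepG step Hstep z []), unr_lift by exact Hf.
      destruct (excluded_middle_informative (g = g)); [ring | congruence].
    + apply has_sum_scal, (has_sum_subset _ (terminal (game g))); [tauto | | exact Hw].
      intros z Hz Hnz; unfold path_prob.
      rewrite (pp_off_floor g step Hoff z []); [ring | apply flr_nil | apply Hz |].
      intros Hf; apply Hnz; split; assumption.
Qed.

Definition induced_on_moves (sG : N * T -> list (T + Mv) -> T + Mv -> R)
    (sg : N -> T -> T -> list Mv -> Mv -> R) : Prop :=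
  forall j g' g h, pmove Gnu (lift g h) (j, g') ->
    forall m, sG (j, g') (lift g h) (inr m) = sg j g' g h m.

Lemma profile_step_lift sG sg g h m : induced_on_moves sG sg -> floor g (h ++ [m]) ->
  profile_step Gnu sG (lift g h) (inr m) = aug_step game F sg g h m.
Proof.
  intros Hind Hf; unfold profile_step, aug_step; cbn [pf Gamma_nu]; rewrite nuP_lift.
  destruct (pf (game g) h) as [j|] eqn:Ep.
  - apply Hind; eapply lift_pmove; eauto.
  - cbn [fc Gamma_nu nuFc]; rewrite unr_lift; reflexivity.
Qed.

Lemma aug_step_off_floor sg g h m : gen_profile game F sg ->
  floor g h -> hist (game g) (h ++ [m]) -> ~ floor g (h ++ [m]) -> aug_step game F sg g h m = 0.
Proof.
  intros Hsg Hf Hm Hn; destruct (flr_leave g h m Hf Hm Hn) as [j [Hp Hout]].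
  unfold aug_step; rewrite (proj2 Hp).
  assert (HG : Gset game F j (fst (F g h))) by (exists g, h; auto).
  apply (proj1 (proj2 (proj1 (Hsg j _ HG g h Hp eq_refl)))), Hout.
Qed.

Lemma exp_payoff_induced sG sg i g w :
  induced_on_moves sG sg -> gen_profile game F sg ->
  exp_payoff (game g) (aug_step game F sg g) i w ->
  exp_payoff Gnu (profile_step Gnu sG) (i, g) (nu g * w).
Proof.
  intros Hind Hsg; apply exp_payoff_lift; [reflexivity | |].
  - intros h m; apply profile_step_lift, Hind.
  - intros h m; apply aug_step_off_floor, Hsg.
Qed.

Lemma behavioral_of_local i g' (b : list (T + Mv) -> T + Mv -> R) (b' : T -> list Mv -> Mv -> R) :
  local_strategy game F i g' b' ->
  (forall g h, pmove Gnu (lift g h) (i, g') ->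
     forall a, b (lift g h) a = match a with inr m => b' g h m | inl _ => 0 end) ->
  behavioral Gnu (i, g') b.
Proof.
  intros Hl Hb x Hx; destruct (nu_pmove_inv x _ Hx) as [g [h [j [-> [Hf [Hp E]]]]]].
  injection E as -> Eg; destruct (Hl g h Hp (eq_sym Eg)) as [[D0 [D1 D2]] Hcons].
  assert (Hmv : forall a, moves Gnu (lift g h) a <->
    exists m, a = inr m /\ exists h2, snd (F g h) h2 /\ hist (game g') (h2 ++ [m]))
    by (intros a; rewrite Eg; apply (nu_moves_player g h j); assumption).
  split; [split; [|split]|].
  - intros [g0|m]; rewrite Hb by exact Hx; [lra | apply D0].
  - intros [g0|m] Hn; rewrite Hb by exact Hx; [reflexivity|].
    apply D1; intros Hm; apply Hn, Hmv; eauto.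
  - eapply has_sum_image; [exact inr_injective | | | exact D2].
    + intros a; rewrite Hmv; split; intros [m [-> Hm]]; eauto.
    + intros m _; rewrite Hb by exact Hx; reflexivity.
  - intros y Hxy a; pose proof Hxy as (_ & Hny & _ & Hpy & _).
    destruct (nu_info_inv _ _ _ Hxy)
      as (g1 & h1 & g2 & h2 & j' & E1 & -> & EF & _ & _ & _ & Hp2 & E).
    apply lift_inj in E1; destruct E1 as [<- <-]; injection E as <- _.
    rewrite (Hb g h Hx), (Hb g2 h2 (conj Hny Hpy)); destruct a as [g0|m]; [reflexivity|].
    apply Hcons; [exact Hp2 | symmetry; exact EF].
Qed.

Definition floor_rep i g' X (gh : T * list Mv) : Prop :=
  pmove Gnu (lift (fst gh) (snd gh)) (i, g') /\ F (fst gh) (snd gh) = X.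

Definition choose_rep i g' X : option (T * list Mv) :=
  match excluded_middle_informative (exists gh, floor_rep i g' X gh) with
  | left H => Some (proj1_sig (constructive_indefinite_description _ H))
  | right _ => None
  end.

Lemma choose_rep_spec i g' X :
  match choose_rep i g' X with
  | Some gh => floor_rep i g' X gh
  | None => forall gh, ~ floor_rep i g' X gh
  end.
Proof.
  unfold choose_rep; destruct (excluded_middle_informative _) as [H | H].
  - exact (proj2_sig (constructive_indefinite_description _ H)).
  - intros gh Hgh; apply H; eauto.
Qed.

(* A pair [(g, h)] whose [~_i]-class contains no history of a floor has no counterpart in
   [Gnu]; it keeps the moves of [default]. *)
Definition local_of_behavioral i g' (b : list (T + Mv) -> T + Mv -> R)
    (default : T -> list Mv -> Mv -> R) : T -> list Mv -> Mv -> R :=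
  fun g h m => match choose_rep i g' (F g h) with
               | Some gh => b (lift (fst gh) (snd gh)) (inr m)
               | None => default g h m
               end.

Lemma local_strategy_of_behavioral i g' b default :
  local_strategy game F i g' default -> behavioral Gnu (i, g') b ->
  local_strategy game F i g' (local_of_behavioral i g' b default).
Proof.
  intros Hd Hb g h Hp Eg; split.
  - unfold local_of_behavioral; pose proof (choose_rep_spec i g' (F g h)) as Hrep.
    destruct (choose_rep i g' (F g h)) as [[g0 h0]|]; [|apply (Hd g h Hp Eg)].
    destruct Hrep as [Hpm EF]; cbn [fst snd] in Hpm, EF.
    destruct (Hb _ Hpm) as [[D0 [D1 D2]] _].
    destruct (nu_pmove_inv _ _ Hpm) as [g1 [h1 [j [E [Hf [Hp0 Ep]]]]]].
    apply lift_inj in E; destruct E as [<- <-].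
    assert (Hmv : forall a, moves Gnu (lift g0 h0) a <->
      exists m, a = inr m /\ exists h2, snd (F g h) h2 /\ hist (game g') (h2 ++ [m]))
      by (intros a; rewrite <- Eg, <- EF; apply (nu_moves_player g0 h0 j); assumption).
    split; [|split].
    + intros m; apply D0.
    + intros m Hm; apply D1; intros Hm'; apply Hmv in Hm'.
      destruct Hm' as [m' [E Hm']]; injection E as <-; contradiction.
    + apply (has_sum_ext (fun m => moves Gnu (lift g0 h0) (inr m)) _
               (fun m => b (lift g0 h0) (inr m))); [| reflexivity |].
      * intros m; rewrite Hmv; split; [intros [m' [E Hm]]; injection E as <-; exact Hm | eauto].
      * apply (has_sum_comp inr _ _ _ inr_injective); [|exact D2].
        intros a Ha; apply Hmv in Ha; destruct Ha as [m [-> _]]; eauto.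
  - intros g2 h2 Hp2 EF2 m; unfold local_of_behavioral; rewrite EF2.
    destruct (choose_rep i g' (F g h)); [reflexivity|].
    apply (Hd g h Hp Eg); assumption.
Qed.

Lemma local_of_behavioral_lift i g' b default g h m :
  behavioral Gnu (i, g') b -> pmove Gnu (lift g h) (i, g') ->
  local_of_behavioral i g' b default g h m = b (lift g h) (inr m).
Proof.
  intros Hb Hp; unfold local_of_behavioral; pose proof (choose_rep_spec i g' (F g h)) as Hrep.
  destruct (choose_rep i g' (F g h)) as [[g1 h1]|].
  - destruct Hrep as [Hp1 EF]; cbn [fst snd] in Hp1, EF.
    symmetry; apply (proj2 (Hb _ Hp)).
    destruct Hp as [Hn Hpf], Hp1 as [Hn1 Hpf1].
    refine (conj Hn (conj Hn1 (conj Hpf (conj Hpf1 _)))); exists g, h, g1, h1; auto.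
  - exfalso; apply (Hrep (g, h)); split; [exact Hp | reflexivity].
Qed.

Definition lift_local (b' : T -> list Mv -> Mv -> R) : list (T + Mv) -> T + Mv -> R :=
  fun x a => match x, a with
             | inl g :: r, inr m => b' g (unr r) m
             | _, _ => 0
             end.

Lemma lift_local_lift b' g h a :
  lift_local b' (lift g h) a = match a with inr m => b' g h m | inl _ => 0 end.
Proof. destruct a; simpl; rewrite ?unr_lift; reflexivity. Qed.

Lemma induced_on_moves_of_induced s s' : induced game F nu s s' -> induced_on_moves s s'.
Proof. intros Hind j g' g h Hp m; exact (Hind j g' g h Hp (inr m)). Qed.

Section Equilibria.
Variables (s' : N -> T -> T -> list Mv -> Mv -> R) (s : N * T -> list (T + Mv) -> T + Mv -> R).
Hypotheses (Hs' : gen_profile game F s') (Hind : induced game F nu s s').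

Lemma nash_gen_nash : (forall g, 0 < nu g) -> nash Gnu s -> gen_nash game F s'.
Proof.
  intros Hpos [_ Hnash] i g' HG t Hag Hloc.
  assert (Ht : gen_profile game F t).
  { intros j g'' Hj; destruct (excluded_middle_informative ((j, g'') = (i, g'))) as [E | E].
    - injection E as -> ->; exact Hloc.
    - rewrite Hag by exact E; apply Hs', Hj. }
  set (tN := fun q => if excluded_middle_informative (q = (i, g'))
                      then lift_local (t i g') else s q).
  assert (HtN : forall q, q <> (i, g') -> tN q = s q).
  { intros q Hq; unfold tN.
    destruct (excluded_middle_informative _); [contradiction | reflexivity]. }
  assert (HtN_ig : tN (i, g') = lift_local (t i g')).
  { unfold tN; destruct (excluded_middle_informative _); [reflexivity | congruence]. }
  assert (Hbeh : behavioral Gnu (i, g') (tN (i, g'))).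
  { rewrite HtN_ig; apply behavioral_of_local with (t i g'); [exact Hloc|].
    intros g h _; apply lift_local_lift. }
  assert (HindN : induced_on_moves tN t).
  { intros j g'' g h Hp m; destruct (excluded_middle_informative ((j, g'') = (i, g'))) as [E | E].
    - injection E as -> ->; rewrite HtN_ig, lift_local_lift; reflexivity.
    - rewrite HtN, Hag by exact E; apply (Hind j g'' g h Hp (inr m)). }
  destruct (Hnash (i, g') HG tN HtN Hbeh) as [V [V' [HV [HV' Hle]]]].
  destruct (exp_payoff_exists _ (augmented_finite g') (aug_step game F s' g') i) as [w Hw].
  destruct (exp_payoff_exists _ (augmented_finite g') (aug_step game F t g') i) as [w' Hw'].
  exists w, w'; split; [exact Hw|]; split; [exact Hw'|].
  apply (Rmult_le_reg_l (nu g')); [apply Hpos|].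
  rewrite <- (has_sum_unique _ _ _ _ HV (exp_payoff_induced s s' i g' w
                (induced_on_moves_of_induced _ _ Hind) Hs' Hw)).
  rewrite <- (has_sum_unique _ _ _ _ HV' (exp_payoff_induced tN t i g' w' HindN Ht Hw')).
  exact Hle.
Qed.

Lemma gen_nash_nash : prob_measure nu -> gen_nash game F s' -> nash Gnu s.
Proof.
  intros [Hnu0 _] Hgen; split.
  { intros [i g'] HG; apply behavioral_of_local with (s' i g'); [apply Hs', HG|].
    intros g h Hp; apply Hind, Hp. }
  intros [i g'] HG t Hag Hbeh.
  set (t' := fun j g'' => if excluded_middle_informative ((j, g'') = (i, g'))
                          then local_of_behavioral i g' (t (i, g')) (s' i g') else s' j g'').
  assert (Ht'_ig : t' i g' = local_of_behavioral i g' (t (i, g')) (s' i g')).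
  { unfold t'; destruct (excluded_middle_informative _); [reflexivity | congruence]. }
  assert (Ht' : forall j g'', (j, g'') <> (i, g') -> t' j g'' = s' j g'').
  { intros j g'' E; unfold t'.
    destruct (excluded_middle_informative _); [contradiction | reflexivity]. }
  assert (Hloc : local_strategy game F i g' (t' i g')).
  { rewrite Ht'_ig; apply local_strategy_of_behavioral; [apply Hs', HG | exact Hbeh]. }
  assert (Hgen' : gen_profile game F t').
  { intros j g'' Hj; destruct (excluded_middle_informative ((j, g'') = (i, g'))) as [E | E].
    - injection E as -> ->; exact Hloc.
    - rewrite Ht' by exact E; apply Hs', Hj. }
  assert (Hind' : induced_on_moves t t').
  { intros j g'' g h Hp m; destruct (excluded_middle_informative ((j, g'') = (i, g'))) as [E | E].
    - injection E as -> ->; rewrite Ht'_ig, local_of_behavioral_lift; auto.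
    - rewrite Hag, Ht' by (congruence || exact E); apply (Hind j g'' g h Hp (inr m)). }
  destruct (Hgen i g' HG t' Ht' Hloc) as [v [v' [Hv [Hv' Hle]]]].
  exists (nu g' * v), (nu g' * v'); split; [|split].
  - apply (exp_payoff_induced _ s'); [|exact Hs' | exact Hv].
    apply induced_on_moves_of_induced, Hind.
  - apply (exp_payoff_induced _ t'); [exact Hind' | exact Hgen' | exact Hv'].
  - apply Rmult_le_compat_l; [apply Hnu0 | exact Hle].
Qed.

End Equilibria.

End GammaNu.

End AwarenessGame.

Theorem theorem3p1
  (N Mv T : Type) (game : T -> egame N Mv) (gm : T)
  (F : T -> list Mv -> T * (list Mv -> Prop)) :
  (exists e : nat -> T, forall g, exists n, e n = g) ->
  awareness_game game F ->
  forall nu : T -> R, prob_measure nu ->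
    (std_game (Gamma_nu game F nu) /\ perfect_recall (Gamma_nu game F nu)) /\
    ((forall g, 0 < nu g) ->
     forall (s' : N -> T -> T -> list Mv -> Mv -> R)
            (s : N * T -> list (T + Mv) -> (T + Mv) -> R),
       gen_profile game F s' ->
       induced game F nu s s' ->
       (nash (Gamma_nu game F nu) s <-> gen_nash game F s')).
Proof.
  intros _ Haw nu Hnu; split.
  - split; [apply Gamma_nu_std | apply Gamma_nu_perfect_recall]; assumption.
  - intros Hpos s' s Hs' Hind; split; [apply nash_gen_nash | apply gen_nash_nash]; assumption.
Qed.
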